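(* Let the system $x^+=f(x,u)$, $\zeta=g(x,u)$ be flat with flat output $y=\varphi(\zeta_{[-Q_1,-1]},x,u,u_{[1,Q_2]})$, and let $z^+=\psi_x(z,v)$, $\eta=\psi_u(z,v)$ be its associated system. Then: (i) The associated system is backward-flat with backward-flat output $\hat y=\varphi(\psi_x(z,v),\psi_u(z,v),\eta_{[-1,-Q_2]})=\hat\varphi(\eta_{[-Q_2,-1]},z,v)$ if and only if the original system is forward-flat with forward-flat output $y=\varphi(x,u,u_{[1,Q_2]})$. (ii) The associated system is forward-flat with forward-flat output $\hat y=\varphi(v_{[Q_1,1]},\psi_x(z,v),\psi_u(z,v))=\hat\varphi(z,v,v_{[1,Q_1]})$ if and only if the original system is backward-flat with backward-flat output $y=\varphi(\zeta_{[-Q_1,-1]},x,u)$. (In these formulas, $\zeta_{[-j]}$ is replaced by $v_{[j]}$ and $u_{[j]}$ by $\eta_{[-j]}$, componentwise.)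
   Context: Consider a nonlinear time-invariant discrete-time system $x^{i,+}=f^i(x,u)$, $i=1,\dots,n$, with $x\in\mathbb{R}^n$, $u\in\mathbb{R}^m$, smooth $f$, $\operatorname{rank}(\partial_u f)=m$, and $\operatorname{rank}(\partial_{(x,u)}f)=n$. Choose $m$ smooth functions $g(x,u)$ such that $(x,u)\mapsto(f(x,u),g(x,u))$ is a local diffeomorphism, with local inverse $x=\psi_x(x^+,\zeta)$, $u=\psi_u(x^+,\zeta)$. The associated system is $z^+=\psi_x(z,v)$, $\eta=\psi_u(z,v)$, $z\in\mathbb{R}^n$, $v,\eta\in\mathbb{R}^m$. Notation: $w_{[\alpha]}$ is the $\alpha$-th forward shift, $w_{[-\alpha]}$ the $\alpha$-th backward shift; for multi-indices, $y_{[-S_1,S_2]}$ denotes all $y^j_{[i]}$ with $-s_{1,j}\le i\le s_{2,j}$. Flatness: the system is flat around an equilibrium if there exist an $m$-tuple $y=\varphi(\zeta_{[-Q_1,-1]},x,u,u_{[1,Q_2]})$ (flat output, with $\zeta=g(x,u)$) and maps $x=F_x(y_{[-R_1,R_2-1]})$, $u=F_u(y_{[-R_1,R_2]})$ establishing locally a one-to-one correspondence between system trajectories and arbitrary sequences $y(k)\in\mathbb{R}^m$. Forward-flat: flat with a flat output $y=\varphi(x,u,u_{[1,Q_2]})$ (no backward shifts) and $R_1=(0,\dots,0)$, i.e. $x=F_x(y_{[0,R_2-1]})$, $u=F_u(y_{[0,R_2]})$. Backward-flat: flat with a flat output $y=\varphi(\zeta_{[-Q_1,-1]},x,u)$ (no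 forward shifts) and $R_2=(0,\dots,0)$, i.e. $x=F_x(y_{[-R_1,-1]})$, $u=F_u(y_{[-R_1,0]})$. The same definitions apply to the associated system with $(z,v,\eta,\psi_x,\psi_u)$ in place of $(x,u,\zeta,f,g)$. *)

From HB Require Import structures.
From mathcomp Require Import all_boot all_order all_algebra.
From mathcomp Require Import all_classical all_reals all_analysis.
Set Implicit Arguments. Unset Strict Implicit. Unset Printing Implicit Defensive.
Import Order.TTheory GRing.Theory Num.Theory.
Import numFieldNormedType.Exports.
Local Open Scope classical_set_scope.
Local Open Scope ring_scope.

Section Smooth.
Context {R : realType} {V W : normedModType R}.

Fixpoint Ck_on (k : nat) (A : set V) (h : V -> W) : Prop :=
  match k with
  | 0 => forall x, A x -> {for x, continuous h}
  | k'.+1 => (forall x, A x -> forall v, derivable h x v) /\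
             (forall v, Ck_on k' A (fun x => derive h x v))
  end.

Definition smooth_on (A : set V) (h : V -> W) : Prop :=
  open A /\ forall k, Ck_on k A h.

Definition smooth_near (h : V -> W) (p : V) : Prop :=
  exists A : set V, A p /\ smooth_on A h.

Definition smooth (h : V -> W) : Prop := smooth_on setT h.
End Smooth.

Section Systems.
Context {R : realType} {n m : nat}.

Local Notation St := 'rV[R]_n.
Local Notation In := 'rV[R]_m.

Definition uncurry_sys {C : Type} (h : St -> In -> C) : St * In -> C :=
  fun p => h p.1 p.2.

Definition jac_x (f : St -> In -> St) (p : St * In) : 'M[R]_(n, n) :=
  \matrix_(i < n, j < n) (derive (uncurry_sys f) p (delta_mx 0 j, 0)) 0 i.
Definition jac_u (f : St -> In -> St) (p : St * In) : 'M[R]_(n, m) :=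
  \matrix_(i < n, j < m) (derive (uncurry_sys f) p (0, delta_mx 0 j)) 0 i.

Definition traj (f : St -> In -> St) (x : int -> St) (u : int -> In) : Prop :=
  forall k : int, x (k + 1) = f (x k) (u k).

Definition win (s : int -> In) (a : int) (L : nat) : 'M[R]_(L, m) :=
  \matrix_(i < L, j < m) s (a + (i : nat)%:Z) 0 j.

Definition cwin (L : nat) (c : In) : 'M[R]_(L, m) :=
  \matrix_(i < L, j < m) c 0 j.

Definition rev_win (L : nat) (M : 'M[R]_(L, m)) : 'M[R]_(L, m) :=
  \matrix_(i < L, j < m) M (rev_ord i) j.

(* Candidate flat output of the general form
     y = phi(zeta_[-Q1,-1], x, u, u_[1,Q2])
   where the first argument is the window zeta(k-Q1),...,zeta(k-1) and the
   last one is the window u(k+1),...,u(k+Q2).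
   flat_output_R f g x0 u0 Q1 Q2 phi R1 R2 states that phi is a flat output
   around the equilibrium (x0,u0) with parametrisation maps
     x = Fx(y_[-R1,R2-1]),  u = Fu(y_[-R1,R2]),
   i.e. both maps are smooth near the equilibrium and they establish locally
   (trajectories staying near the equilibrium / output sequences staying near
   the equilibrium value of y) a one-to-one correspondence between system
   trajectories and arbitrary sequences y(k) in R^m. *)
Definition flat_output_R (f : St -> In -> St) (g : St -> In -> In)
    (x0 : St) (u0 : In) (Q1 Q2 : nat)
    (phi : 'M[R]_(Q1, m) -> St -> In -> 'M[R]_(Q2, m) -> In)
    (R1 R2 : nat) : Prop :=
  let zeta0 := g x0 u0 in
  let y0 := phi (cwin Q1 zeta0) x0 u0 (cwin Q2 u0) in
  exists (Fx : 'M[R]_(R1 + R2, m) -> St) (Fu : 'M[R]_((R1 + R2).+1, m) -> In),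
    smooth_near (fun w : 'M[R]_(Q1, m) * (St * (In * 'M[R]_(Q2, m))) =>
                   phi w.1 w.2.1 w.2.2.1 w.2.2.2)
                (cwin Q1 zeta0, (x0, (u0, cwin Q2 u0))) /\
    smooth_near Fx (cwin (R1 + R2) y0) /\
    smooth_near Fu (cwin (R1 + R2).+1 y0) /\
    exists (U : set (St * In)) (Y : set In),
      nbhs (x0, u0) U /\ nbhs y0 Y /\
      (forall (x : int -> St) (u : int -> In),
         traj f x u -> (forall k, U (x k, u k)) ->
         let zeta := fun k => g (x k) (u k) in
         let y := fun k => phi (win zeta (k - Q1%:Z) Q1) (x k) (u k)
                               (win u (k + 1) Q2) in
         forall k, x k = Fx (win y (k - R1%:Z) (R1 + R2)) /\
                   u k = Fu (win y (k - R1%:Z) (R1 + R2).+1)) /\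
      (forall y : int -> In, (forall k, Y (y k)) ->
         let x := fun k => Fx (win y (k - R1%:Z) (R1 + R2)) in
         let u := fun k => Fu (win y (k - R1%:Z) (R1 + R2).+1) in
         let zeta := fun k => g (x k) (u k) in
         traj f x u /\
         forall k, y k = phi (win zeta (k - Q1%:Z) Q1) (x k) (u k)
                             (win u (k + 1) Q2)).

Definition is_flat_output f g x0 u0 Q1 Q2 phi : Prop :=
  exists R1 R2, @flat_output_R f g x0 u0 Q1 Q2 phi R1 R2.

Definition forward_flat_output f g x0 u0 (Q2 : nat)
    (phi : St -> In -> 'M[R]_(Q2, m) -> In) : Prop :=
  exists R2, @flat_output_R f g x0 u0 0 Q2 (fun _ => phi) 0 R2.

Definition backward_flat_output f g x0 u0 (Q1 : nat)
    (phi : 'M[R]_(Q1, m) -> St -> In -> In) : Prop :=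
  exists R1, @flat_output_R f g x0 u0 Q1 0 (fun a x u _ => phi a x u) R1 0.

Definition local_inverse (f : St -> In -> St) (g : St -> In -> In)
    (psix : St -> In -> St) (psiu : St -> In -> In) (x0 : St) (u0 : In) :=
  exists (A : set (St * In)) (B : set (St * In)),
    A (x0, u0) /\ B (f x0 u0, g x0 u0) /\
    smooth_on A (fun p => (f p.1 p.2, g p.1 p.2)) /\
    smooth_on B (fun q => (psix q.1 q.2, psiu q.1 q.2)) /\
    (forall p, A p -> B (f p.1 p.2, g p.1 p.2) /\
       psix (f p.1 p.2) (g p.1 p.2) = p.1 /\ psiu (f p.1 p.2) (g p.1 p.2) = p.2) /\
    (forall q, B q -> A (psix q.1 q.2, psiu q.1 q.2) /\
       f (psix q.1 q.2) (psiu q.1 q.2) = q.1 /\ g (psix q.1 q.2) (psiu q.1 q.2) = q.2).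
End Systems.

Arguments flat_output_R {R n m} f g x0 u0 Q1 Q2 phi R1 R2.
Arguments is_flat_output {R n m} f g x0 u0 Q1 Q2 phi.
Arguments forward_flat_output {R n m} f g x0 u0 Q2 phi.
Arguments backward_flat_output {R n m} f g x0 u0 Q1 phi.
Arguments local_inverse {R n m} f g psix psiu x0 u0.
Arguments win {R m} s a L.
Arguments cwin {R m} L c.
Arguments rev_win {R m L} M.

(* A trajectory (x, u) of x+ = f(x, u), zeta = g(x, u) gives the
   trajectory z(k) = x(-k), v(k) = zeta(-k-1) of the associated system, with output
   eta(k) = u(-k-1), and conversely, since (f, g) and (psi_x, psi_u) are inverse to
   each other.  Reversal turns forward shifts of u into backward shifts of eta and
   backward shifts of zeta into forward shifts of v.  Hence a flat output with
   parametrisation x = Fx(y_[-R1,R2-1]), u = Fu(y_[-R1,R2]) yields a flat output of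
   the associated system with output sequence y(-k-1), reversed windows, and the
   roles of (Q1, Q2) and (R1, R2) exchanged: forward-flat (R1 = 0) corresponds to
   backward-flat (R2 = 0) and vice versa.  The only analytic work is to check that
   the new parametrisation, obtained from Fx, Fu, g and the local inverse by
   composition, is again smooth; this needs a chain rule for smoothness defined by
   iterated directional derivatives. *)

From HB Require Import structures.
From mathcomp Require Import all_boot all_order all_algebra.
From mathcomp Require Import all_classical all_reals all_analysis.
From mathcomp Require Import zify.
Import Order.TTheory GRing.Theory Num.Theory.
Import numFieldNormedType.Exports.
Local Open Scope classical_set_scope.
Local Open Scope ring_scope.
Set Implicit Arguments. Unset Strict Implicit. Unset Printing Implicit Defensive.

Section ContinuousLinear.
Context {R : realType}.

Definition clinear {V W : normedModType R} (L : V -> W) :=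
  continuous L /\ (forall a b, L (a + b) = L a + L b) /\
  (forall (r : R) a, L (r *: a) = r *: L a).

Lemma clinearB {V W : normedModType R} (L : V -> W) : clinear L ->
  forall a b, L (a - b) = L a - L b.
Proof. by move=> [_ [LD LZ]] a b; rewrite LD -scaleN1r LZ scaleN1r. Qed.

Lemma clinear_id {V : normedModType R} : clinear (@id V).
Proof. by split => //; move=> x; exact: cvg_id. Qed.

Lemma clinear0 {V W : normedModType R} : clinear (fun _ : V => (0 : W)).
Proof.
split; first by move=> x; exact: cvg_cst.
by split => *; rewrite ?addr0 ?scaler0.
Qed.

Lemma clinear_comp {X Y Z : normedModType R} (f : X -> Y) (g : Y -> Z) :
  clinear f -> clinear g -> clinear (g \o f).
Proof.
move=> [cf [fD fZ]] [cg [gD gZ]]; split.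
  by move=> x; apply: continuous_comp; [exact: cf | exact: cg].
by split => * /=; rewrite ?fD ?gD ?fZ ?gZ.
Qed.

Lemma clinear_pair {X Y Z : normedModType R} (f : X -> Y) (g : X -> Z) :
  clinear f -> clinear g -> clinear (fun x => (f x, g x)).
Proof.
move=> [cf [fD fZ]] [cg [gD gZ]]; split.
  by move=> x; apply: cvg_pair; [exact: cf | exact: cg].
by split => *; rewrite ?fD ?gD ?fZ ?gZ.
Qed.

Lemma clinear_fst {X Y : normedModType R} : clinear (@fst X Y).
Proof. by split => // -[x y]; exact: cvg_fst. Qed.

Lemma clinear_snd {X Y : normedModType R} : clinear (@snd X Y).
Proof. by split => // -[x y]; exact: cvg_snd. Qed.

Lemma clinear_scale {W : normedModType R} (w : W) : clinear (fun r : R => r *: w).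
Proof.
split; first by move=> r; apply: continuousZr_tmp; exact: cvg_id.
by split => *; rewrite ?scalerDl ?scalerA.
Qed.

Lemma clinear_coord M (l : 'I_M) : clinear (fun w : 'rV[R]_M => w 0 l).
Proof. by split; [exact: coord_continuous | split => *; rewrite !mxE]. Qed.

Lemma derive_postcomp_clinear {V W W' : normedModType R} (L : W -> W')
    (h : V -> W) x v :
  clinear L -> derivable h x v ->
  derivable (L \o h) x v /\ 'D_v (L \o h) x = L ('D_v h x).
Proof.
move=> hL dh; have [Lc [LD LZ]] := hL.
have E : (fun t : R => t^-1 *: (((L \o h) \o shift x) (t *: v) - (L \o h) x)) =
    L \o (fun t : R => t^-1 *: ((h \o shift x) (t *: v) - h x)).
  by apply/funext => t /=; rewrite LZ (clinearB hL).
have cv : (L \o (fun t : R => t^-1 *: ((h \o shift x) (t *: v) - h x))) @ 0^'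
    --> L ('D_v h x) by apply: continuous_cvg; [exact: Lc | exact: dh].
split; first by rewrite /derivable E; apply/cvg_ex; eexists; exact: cv.
by rewrite /derive E; exact: cvg_lim.
Qed.

Lemma derive_precomp_clinear {V V' W : normedModType R} (L : V' -> V)
    (h : V -> W) x v :
  clinear L ->
  (derivable (h \o L) x v <-> derivable h (L x) (L v)) /\
  'D_v (h \o L) x = 'D_(L v) h (L x).
Proof.
move=> [_ [LD LZ]].
have E : (fun t : R => t^-1 *: (((h \o L) \o shift x) (t *: v) - (h \o L) x)) =
    (fun t : R => t^-1 *: ((h \o shift (L x)) (t *: L v) - h (L x))).
  by apply/funext => t /=; rewrite LD LZ.
by rewrite /derivable /derive E.
Qed.

End ContinuousLinear.

Section Ck.
Context {R : realType} {V W : normedModType R}.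
Implicit Types (A B : set V) (h : V -> W).

Lemma open_nbhs_of A x : open A -> A x -> nbhs x A.
Proof. by move=> oA Ax; move: oA; rewrite openE => /(_ x Ax). Qed.

Lemma Ck_on_eq k A h1 h2 : open A ->
  (forall x, A x -> h1 x = h2 x) -> Ck_on k A h1 -> Ck_on k A h2.
Proof.
move=> oA; elim: k h1 h2 => [|k IH] h1 h2 e /=.
  move=> c x Ax.
  have nA : {near x, h1 =1 h2}.
    by apply: filterS (open_nbhs_of oA Ax) => y Ay; exact: e.
  rewrite /prop_for /continuous_at -(e x Ax).
  exact: cvg_trans (near_eq_cvg nA) (c x Ax).
move=> [d c]; split.
  move=> x Ax v; apply: near_eq_derivable (d x Ax v).
  by apply: filterS (open_nbhs_of oA Ax) => y Ay; exact: e.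
move=> v; apply: (IH (fun x => 'D_v h1 x)) (c v) => x Ax.
apply: near_eq_derive.
by apply: filterS (open_nbhs_of oA Ax) => y Ay; exact: e.
Qed.

Lemma Ck_on_sub k A B h : B `<=` A -> Ck_on k A h -> Ck_on k B h.
Proof.
move=> BA; elim: k h => [|k IH] h /=.
  by move=> c x Bx; exact: c (BA _ Bx).
move=> [d c]; split; first by move=> x Bx; exact: d (BA _ Bx).
by move=> v; exact: IH.
Qed.

Lemma Ck_on_cst k A (c : W) : open A -> Ck_on k A (fun _ => c).
Proof.
move=> oA; elim: k c => [|k IH] c /=.
  by move=> x _; exact: cvg_cst.
split; first by move=> x _ v; exact: derivable_cst.
move=> v; apply: (Ck_on_eq (h1 := fun _ => 0)) => //.
by move=> x _; rewrite (derive_cst c x v).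
Qed.

Lemma Ck_on_add k A (f g : V -> W) : open A ->
  Ck_on k A f -> Ck_on k A g -> Ck_on k A (fun x => f x + g x).
Proof.
move=> oA; elim: k f g => [|k IH] f g /=.
  by move=> cf cg x Ax; exact: cvgD (cf x Ax) (cg x Ax).
move=> [df cf] [dg cg]; split.
  by move=> x Ax v; exact: derivableD (df x Ax v) (dg x Ax v).
move=> v; apply: (Ck_on_eq (h1 := fun x => 'D_v f x + 'D_v g x)) => //.
  by move=> x Ax; rewrite -(deriveD (df x Ax v) (dg x Ax v)).
exact: IH.
Qed.

Lemma Ck_on_sum k A N (F : 'I_N -> V -> W) : open A ->
  (forall i, Ck_on k A (F i)) -> Ck_on k A (fun x => \sum_(i < N) F i x).
Proof.
move=> oA; elim: N F => [|N IH] F hF.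
  apply: (Ck_on_eq (h1 := fun _ => 0)) => //; last exact: Ck_on_cst.
  by move=> x _; rewrite big_ord0.
apply: (Ck_on_eq (h1 := fun x => \sum_(i < N) F (widen_ord (leqnSn N) i) x
                                 + F ord_max x)) => //.
  by move=> x _; rewrite big_ord_recr.
by apply: Ck_on_add => //; exact: (IH (fun i => F (widen_ord (leqnSn N) i))).
Qed.

End Ck.

Lemma Ck_on_postcomp {R : realType} {V W W' : normedModType R} k (A : set V)
    (h : V -> W) (L : W -> W') :
  open A -> clinear L -> Ck_on k A h -> Ck_on k A (L \o h).
Proof.
move=> oA hL; elim: k h => [|k IH] h /=.
  by move=> c x Ax; apply: continuous_cvg; [exact: hL.1 | exact: c].
move=> [d c]; split.
  by move=> x Ax v; have [] := derive_postcomp_clinear hL (d x Ax v).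
move=> v; apply: (Ck_on_eq (h1 := L \o (fun x => 'D_v h x))) => //.
  by move=> x Ax; have [_ ->] := derive_postcomp_clinear hL (d x Ax v).
exact: IH.
Qed.

Lemma Ck_on_precomp {R : realType} {V V' W : normedModType R} k (A : set V)
    (h : V -> W) (L : V' -> V) :
  open A -> clinear L -> Ck_on k A h -> Ck_on k (L @^-1` A) (h \o L).
Proof.
move=> oA hL; have oLA : open (L @^-1` A).
  by apply: open_comp => // x _; exact: hL.1.
elim: k h => [|k IH] h /=.
  by move=> c x Ax; apply: continuous_comp; [exact: hL.1 | exact: c].
move=> [d c]; split.
  move=> x Ax v; have [[_ H] _] := derive_precomp_clinear h x v hL.
  by apply: H; exact: d.
move=> v; apply: (Ck_on_eq (h1 := (fun y => 'D_(L v) h y) \o L)) => //.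
  by move=> x Ax; have [_ ->] := derive_precomp_clinear h x v hL.
exact: IH.
Qed.

Section CkUpTo.
Context {R : realType}.

(* [Ck_on k.+1 A h] constrains the derivatives of [h] but not [h] itself, so
   inductions on the order carry all lower orders along. *)
Definition Ck_upto {V W : normedModType R} j (A : set V) (h : V -> W) :=
  forall i, (i <= j)%N -> Ck_on i A h.

Section Basic.
Context {V W : normedModType R}.
Implicit Types (A : set V) (h : V -> W).

Lemma Ck_upto_eq j A h1 h2 : open A ->
  (forall x, A x -> h1 x = h2 x) -> Ck_upto j A h1 -> Ck_upto j A h2.
Proof. by move=> oA e c i ij; exact: Ck_on_eq oA e (c i ij). Qed.

Lemma Ck_upto_sum j A N (F : 'I_N -> V -> W) : open A ->
  (forall i, Ck_upto j A (F i)) -> Ck_upto j A (fun x => \sum_(i < N) F i x).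
Proof. by move=> oA hF i ij; apply: Ck_on_sum => // l; exact: hF. Qed.

Lemma Ck_upto_le j j' A h : (j' <= j)%N -> Ck_upto j A h -> Ck_upto j' A h.
Proof. by move=> jj c i ij; apply: c; exact: leq_trans ij jj. Qed.

Lemma Ck_upto_derive j A h :
  Ck_upto j.+1 A h -> forall v, Ck_upto j A (fun x => 'D_v h x).
Proof. by move=> c v i ij; have [_] := c i.+1 ij; apply. Qed.

Lemma smooth_on_Ck_upto j A h : smooth_on A h -> Ck_upto j A h.
Proof. by move=> [_ s] i _; exact: s. Qed.

Lemma smooth_on_derive A h :
  smooth_on A h -> forall v, smooth_on A (fun x => 'D_v h x).
Proof. by move=> [oA c] v; split => // i; have [_] := c i.+1; apply. Qed.

End Basic.

Lemma Ck_upto_postcomp {V W W' : normedModType R} j (A : set V) (h : V -> W)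
    (L : W -> W') :
  open A -> clinear L -> Ck_upto j A h -> Ck_upto j A (L \o h).
Proof. by move=> oA hL c i ij; apply: Ck_on_postcomp => //; exact: c. Qed.

Lemma smooth_on_postcomp {V W W' : normedModType R} (A : set V) (h : V -> W)
    (L : W -> W') :
  clinear L -> smooth_on A h -> smooth_on A (L \o h).
Proof. by move=> hL [oA c]; split => // i; exact: Ck_on_postcomp. Qed.

Lemma smooth_on_precomp {V V' W : normedModType R} (A : set V) (h : V -> W)
    (L : V' -> V) :
  clinear L -> smooth_on A h -> smooth_on (L @^-1` A) (h \o L).
Proof.
move=> hL [oA c]; split; last by move=> i; exact: Ck_on_precomp.
by apply: open_comp => // x _; exact: hL.1.
Qed.

Lemma Ck_on_mul {V : normedModType R} j (A : set V) (f g : V -> R) : open A ->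
  Ck_upto j A f -> Ck_upto j A g -> Ck_on j A (fun x => f x * g x).
Proof.
move=> oA; elim: j f g => [|j IH] f g cf cg /=.
  by move=> x Ax; apply: cvgM; [exact: (cf 0%N isT x Ax) | exact: (cg 0%N isT x Ax)].
have [df _] := cf 1%N isT; have [dg _] := cg 1%N isT.
split; first by move=> x Ax v; exact: derivableM (df x Ax v) (dg x Ax v).
move=> v; apply: (Ck_on_eq (h1 := fun x => f x * 'D_v g x + g x * 'D_v f x)) => //.
  by move=> x Ax; rewrite (deriveM (df x Ax v) (dg x Ax v)).
apply: Ck_on_add => //; apply: IH.
- exact: Ck_upto_le cf.
- exact: Ck_upto_derive.
- exact: Ck_upto_le cg.
- exact: Ck_upto_derive.
Qed.

Lemma Ck_upto_scale {V : normedModType R} j (A : set V) M (c : V -> R)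
    (G : V -> 'rV[R]_M) :
  open A -> Ck_upto j A c -> Ck_upto j A G -> Ck_upto j A (fun x => c x *: G x).
Proof.
move=> oA cc cG.
apply: (Ck_upto_eq (h1 := fun x => \sum_(l < M) (c x * G x 0 l) *: 'e_l)) => //.
  by move=> x _; rewrite [RHS]row_sum_delta; apply: eq_bigr => l _; rewrite mxE.
apply: Ck_upto_sum => // l.
apply: (@Ck_upto_postcomp _ _ _ j A _ (fun r : R => r *: 'e_l)) => //.
  exact: clinear_scale.
move=> i ij; apply: Ck_on_mul => //; first exact: Ck_upto_le cc.
exact: Ck_upto_le (Ck_upto_postcomp oA (clinear_coord l) cG).
Qed.

End CkUpTo.

Section FiniteDimensional.
Context {R : realType}.

Lemma mx_norm_le a b (v : 'M[R]_(a, b)) (C : R) : 0 <= C ->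
  (forall i j, `|v i j| <= C) -> `|v| <= C.
Proof. by move=> C0 hv; rewrite [X in X <= _]mx_normrE; apply: bigmax_le => // ij _. Qed.

Lemma mx_entry_le_norm a b (v : 'M[R]_(a, b)) i j : `|v i j| <= `|v|.
Proof.
rewrite [X in _ <= X]mx_normrE.
exact: (le_bigmax _ (fun ij : 'I_a * 'I_b => `|v ij.1 ij.2|) (i, j)).
Qed.

Lemma continuous_mx_entrywise {T : topologicalType} a b (f : T -> 'M[R]_(a, b)) x :
  (forall i j, {for x, continuous (fun y => f y i j)}) -> {for x, continuous f}.
Proof.
move=> c; apply/cvgrPdist_lt => e e0.
have : \forall y \near x, forall ij : 'I_a * 'I_b,
    `|f x ij.1 ij.2 - f y ij.1 ij.2| < e / 2.
  apply: (@filter_forall _ _ (fun ij y => `|f x ij.1 ij.2 - f y ij.1 ij.2| < e / 2)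
    _ (nbhs_filter x)) => ij.
  by have /cvgrPdist_lt := c ij.1 ij.2; apply; rewrite divr_gt0.
apply: filterS => y H.
apply: (@le_lt_trans _ _ (e / 2)); last by rewrite ltr_pdivrMr // ltr_pMr // ltr1n.
apply: mx_norm_le; first by rewrite divr_ge0 // ltW.
by move=> i j; have := H (i, j); rewrite !mxE => /ltW.
Qed.

Lemma continuous_mulmxr a b c (J : 'M[R]_(b, c)) :
  continuous (fun w : 'M[R]_(a, b) => w *m J).
Proof.
move=> w; apply: continuous_mx_entrywise => i j.
under [X in {for _, continuous X}]eq_fun do rewrite mxE.
apply: (continuous_big (op := +%R) (x0 := 0)); first exact: add_continuous.
move=> l _ y; apply: (cvgM (F := nbhs y)); [exact: coord_continuous | exact: cvg_cst].
Qed.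

Lemma is_derive_line {V : normedModType R} (phi : V -> R) (p e : V) (t : R) :
  derivable phi (p + t *: e) e ->
  is_derive t 1 (fun s : R => phi (p + s *: e)) ('D_e phi (p + t *: e)).
Proof.
move=> d.
have E : (fun s : R => s^-1 *: (((fun s => phi (p + s *: e)) \o shift t) (s *: 1)
              - phi (p + t *: e))) =
         (fun s : R => s^-1 *: ((phi \o shift (p + t *: e)) (s *: e) - phi (p + t *: e))).
  apply/funext => s /=; congr (_ *: (phi _ - _)).
  by rewrite [_%:A]mulr1 scalerDl addrCA.
by split; [rewrite /derivable E | rewrite /derive E].
Qed.

Lemma MVT_from0 (g dg : R -> R) (b : R) :
  (forall t : R, `|t| <= `|b| -> is_derive t (1 : R) g (dg t)) ->
  exists c, `|c| <= `|b| /\ g b - g 0 = dg c * b.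
Proof.
move=> H.
have cont t : `|t| <= `|b| -> {for t, continuous g}.
  move=> /H [d _]; apply: differentiable_continuous; exact/derivable1_diffP.
case: (ltrgtP b 0) => hb.
- have [c cI E] : exists2 c, c \in `]b, 0[ & g 0 - g b = dg c * (0 - b).
    apply: MVT => //.
      move=> c; rewrite in_itv /= => /andP[? ?]; apply: H.
      by rewrite !ltr0_norm // lerN2 ltW.
    apply: continuous_in_subspaceT => c; rewrite inE /= in_itv /= => /andP[h1 h2].
    apply: cont; rewrite (ltr0_norm hb); have [c0|c0] := leP 0 c.
      by rewrite ger0_norm // (le_trans h2) // oppr_ge0 ltW.
    by rewrite ltr0_norm // lerN2.
  exists c; move: cI; rewrite in_itv /= => /andP[h1 h2]; split.
    by rewrite !ltr0_norm // lerN2 ltW.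
  by apply: (can_inj (@opprK _)); rewrite opprB E sub0r mulrN.
- have [c cI E] : exists2 c, c \in `]0, b[ & g b - g 0 = dg c * (b - 0).
    apply: MVT => //.
      by move=> c; rewrite in_itv /= => /andP[? ?]; apply: H; rewrite !gtr0_norm // ltW.
    apply: continuous_in_subspaceT => c; rewrite inE /= in_itv /= => /andP[h1 h2].
    by apply: cont; rewrite !ger0_norm // ltW.
  exists c; move: cI; rewrite in_itv /= => /andP[h1 h2]; split.
    by rewrite !gtr0_norm // ltW.
  by rewrite E subr0.
- by exists 0; rewrite hb normr0 subrr mulr0.
Qed.

Definition stair N (x w : 'rV[R]_N) (k : nat) : 'rV[R]_N :=
  x + \row_l (if (l < k)%N then w 0 l else 0).

Lemma stair0 N (x w : 'rV[R]_N) : stair x w 0 = x.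
Proof. by apply/matrixP => i j; rewrite !mxE /= addr0. Qed.

Lemma stair_end N (x w : 'rV[R]_N) : stair x w N = x + w.
Proof. by congr (_ + _); apply/matrixP => i j; rewrite !mxE ltn_ord (ord1 i). Qed.

Lemma stairS N (x w : 'rV[R]_N) (i : 'I_N) :
  stair x w i.+1 = stair x w i + w 0 i *: delta_mx 0 i.
Proof.
rewrite /stair -addrA; congr (_ + _); apply/matrixP => a l.
rewrite !mxE (ord1 a) eqxx /= ltnS leq_eqVlt; case: (eqVneq l i) => [->|li] /=.
  by rewrite ltnn eqxx add0r mulr1.
by rewrite (_ : (l == i :> nat) = false) ?mulr0 ?addr0 //; exact/negbTE.
Qed.

Lemma stair_near N (x w : 'rV[R]_N) (i : 'I_N) (s : R) :
  `|s| <= `|w 0 i| -> `|stair x w i + s *: delta_mx 0 i - x| <= `|w|.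
Proof.
move=> hs; apply: mx_norm_le => // a l.
rewrite /stair addrAC (addrC x) addrK !mxE (ord1 a) eqxx /=.
case: ifPn => hl.
  have -> : (l == i) = false by apply/negbTE; rewrite neq_ltn hl.
  by rewrite mulr0 addr0 mx_entry_le_norm.
rewrite add0r; case: (eqVneq l i) => [_|_].
  by rewrite mulr1 (le_trans hs) // mx_entry_le_norm.
by rewrite mulr0 normr0.
Qed.

Lemma partials_increment_bound (N : nat) (phi : 'rV[R]_N -> R) (x w : 'rV[R]_N)
    (e : R) :
  (forall z, `|z - x| <= `|w| -> forall i : 'I_N, derivable phi z (delta_mx 0 i) /\
      `|'D_(delta_mx 0 i) phi z - 'D_(delta_mx 0 i) phi x| <= e) ->
  `|phi (x + w) - phi x - \sum_(i < N) w 0 i * 'D_(delta_mx 0 i) phi x|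
     <= N%:R * e * `|w|.
Proof.
move=> H; pose p := stair x w.
have -> : phi (x + w) - phi x = \sum_(i < N) (phi (p i.+1) - phi (p i)).
  rewrite -stair_end -[in phi x](stair0 x w).
  by rewrite -(telescope_sumr (fun k => phi (p k)) (leq0n N)) big_mkord.
rewrite -sumrB; apply: le_trans (ler_norm_sum _ _ _) _.
rewrite (_ : N%:R * e * `|w| = \sum_(i < N) (e * `|w|)); last first.
  by rewrite sumr_const card_ord -mulrA mulr_natl.
apply: ler_sum => i _.
pose g s := phi (p i + s *: delta_mx 0 i).
pose dg s := 'D_(delta_mx 0 i) phi (p i + s *: delta_mx 0 i).
have [c [hc E]] : exists c, `|c| <= `|w 0 i| /\ g (w 0 i) - g 0 = dg c * w 0 i.
  apply: MVT_from0 => t ht; apply: is_derive_line.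
  by have [] := H _ (stair_near x ht) i.
have -> : phi (p i.+1) - phi (p i) = g (w 0 i) - g 0.
  by rewrite /g /p stairS scale0r addr0.
rewrite E /dg [w 0 i * _]mulrC -mulrBl normrM.
apply: ler_pM => //; last exact: mx_entry_le_norm.
by have [_] := H _ (stair_near x hc) i.
Qed.

Lemma differentiable_eps N M (h : 'rV[R]_N -> 'rV[R]_M) x
    (df : {linear 'rV[R]_N -> 'rV[R]_M}) :
  continuous df ->
  (forall eps : R, 0 < eps ->
     \forall w \near (0 : 'rV[R]_N), `|h (w + x) - h x - df w| <= eps * `|w|) ->
  differentiable h x.
Proof.
move=> cdf L.
have P : exists df0 : {linear 'rV[R]_N -> 'rV[R]_M}, continuous df0 /\
    forall y, h y = h (lim (nbhs x)) + df0 (y - lim (nbhs x))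
                    +o_(y \near x) (y - lim (nbhs x)).
  exists df; split => //; rewrite lim_id //.
  suff E : h = (fun y => h x + df (y - x)) +o_ x (fun y => y - x).
    by move=> y; rewrite {1}E.
  apply/eqaddoP => eps eps0; have := L eps eps0; rewrite (near_shift x 0).
  by apply: filterS => y /=; rewrite sub0r subrK opprD addrA.
by apply/diffP; exact: getPex P.
Qed.

Lemma partials_near N M (S : set 'rV[R]_N) (h : 'rV[R]_N -> 'rV[R]_M) x e :
  open S -> S x -> (forall i, {for x, continuous (fun y => 'D_(delta_mx 0 i) h y)}) ->
  0 < e ->
  \forall y \near x, S y /\ forall (i : 'I_N) (j : 'I_M),
    `|'D_(delta_mx 0 i) h x 0 j - 'D_(delta_mx 0 i) h y 0 j| < e.
Proof.
move=> oS Sx ch e0; apply: filterI; first exact: open_nbhs_of oS Sx.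
have : \forall y \near x, forall ij : 'I_N * 'I_M,
    `|'D_(delta_mx 0 ij.1) h x 0 ij.2 - 'D_(delta_mx 0 ij.1) h y 0 ij.2| < e.
  apply: (@filter_forall _ _ (fun ij y =>
    `|'D_(delta_mx 0 ij.1) h x 0 ij.2 - 'D_(delta_mx 0 ij.1) h y 0 ij.2| < e)
    _ (nbhs_filter x)) => ij.
  have : {for x, continuous (fun y => 'D_(delta_mx 0 ij.1) h y 0 ij.2)}.
    apply: (@continuous_comp _ _ _ (fun y => 'D_(delta_mx 0 ij.1) h y)
      (fun w : 'rV[R]_M => w 0 ij.2)); first exact: ch.
    exact: coord_continuous.
  by move/cvgrPdist_lt; apply.
by apply: filterS => y H i j; exact: H (i, j).
Qed.

Lemma differentiable_partials N M (S : set 'rV[R]_N) (h : 'rV[R]_N -> 'rV[R]_M) x :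
  open S -> S x -> (forall y, S y -> forall v, derivable h y v) ->
  (forall i, {for x, continuous (fun y => 'D_(delta_mx 0 i) h y)}) ->
  differentiable h x.
Proof.
move=> oS Sx dh ch.
pose J : 'M[R]_(N, M) := \matrix_(i, j) ('D_(delta_mx 0 i) h x) 0 j.
apply: (@differentiable_eps _ _ _ _ (mulmxr J)); first exact: continuous_mulmxr.
move=> eps eps0; pose e := eps / (N%:R + 1).
have e0 : 0 < e by rewrite divr_gt0 // ltr_wpDl.
have partialD i j : derivable (fun y => h y 0 j) x (delta_mx 0 i) /\
    'D_(delta_mx 0 i) (fun y => h y 0 j) x = ('D_(delta_mx 0 i) h x) 0 j.
  exact: (derive_postcomp_clinear (clinear_coord j) (dh x Sx (delta_mx 0 i))).
have /nbhs_ballP [d /= d0 dB] := partials_near oS Sx ch e0.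
apply/nbhs_ballP; exists d => // w Bw.
have wd : `|w| < d by move: Bw; rewrite -ball_normE /= sub0r normrN.
apply: mx_norm_le => [|a j]; first by rewrite mulr_ge0 // ltW.
have Hz z : `|z - x| <= `|w| -> forall i : 'I_N,
    derivable (fun y => h y 0 j) z (delta_mx 0 i) /\
    `|'D_(delta_mx 0 i) (fun y => h y 0 j) z
      - 'D_(delta_mx 0 i) (fun y => h y 0 j) x| <= e.
  move=> zx i.
  have Bz : ball x d z by rewrite -ball_normE /= distrC (le_lt_trans zx).
  have [Sz Dz] := dB _ Bz.
  have [d1 ->] := derive_postcomp_clinear (clinear_coord j) (dh z Sz (delta_mx 0 i)).
  split; first exact: d1.
  by rewrite (partialD i j).2 distrC; exact: ltW (Dz i j).
rewrite (ord1 a) !mxE [w + x]addrC.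
have -> : \sum_(l < N) w 0 l * J l j =
    \sum_(i < N) w 0 i * 'D_(delta_mx 0 i) (fun y => h y 0 j) x.
  by apply: eq_bigr => i _; rewrite mxE (partialD i j).2.
apply: le_trans (partials_increment_bound Hz) _.
rewrite ler_wpM2r // /e mulrA ler_pdivrMr ?ltr_wpDl // mulrC ler_wpM2l ?ltW //.
by rewrite ltrDl.
Qed.

Lemma derive_along_line {V W : normedModType R} (f : V -> W) x v :
  'D_v f x = 'D_1 (fun t : R => f (t *: v + x)) 0.
Proof.
rewrite /derive; set g1 := fun h => h^-1 *: _; set g2 := fun h => h^-1 *: _.
suff -> : g1 = g2 by [].
by rewrite funeqE /g1 /g2 => h /=; rewrite addr0 scale0r add0r [_%:A]mulr1.
Qed.

Lemma derive_comp_partials {V : normedModType R} N M (h : 'rV[R]_N -> 'rV[R]_M)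
    (k : V -> 'rV[R]_N) x v :
  differentiable h (k x) -> derivable k x v ->
  derivable (h \o k) x v /\
  'D_v (h \o k) x = \sum_(i < N) ('D_v k x) 0 i *: 'D_(delta_mx 0 i) h (k x).
Proof.
move=> dh dk.
pose g := fun t : R => k (t *: v + x).
have g0 : g 0 = k x by rewrite /g scale0r add0r.
have dg : differentiable g 0 by apply/derivable1_diffP; move/derivable1P : dk.
have dhg : differentiable (h \o g) 0 by apply: differentiable_comp; rewrite // g0.
split; first by apply/derivable1P; exact/derivable1_diffP.
have dg1 : 'd g 0 1 = 'D_v k x by rewrite -deriveE // (derive_along_line k).
have -> : 'D_v (h \o k) x = 'D_1 (h \o g) 0 by rewrite derive_along_line.
rewrite deriveE // diff_comp ?g0 //= dg1.
rewrite {1}['D_v k x]row_sum_delta linear_sum /=.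
by apply: eq_bigr => i _; rewrite linearZ /= (@deriveE _ _ _ h).
Qed.

Lemma Ck_upto_comp {V : normedModType R} N M (S : set 'rV[R]_N) (T : set V)
    (k : V -> 'rV[R]_N) :
  open S -> smooth_on T k -> (forall x, T x -> S (k x)) ->
  forall j (h : 'rV[R]_N -> 'rV[R]_M), smooth_on S h -> Ck_upto j T (h \o k).
Proof.
move=> oS sk kTS; have [oT ck] := sk; elim => [|j IH] h sh.
  move=> i; rewrite leqn0 => /eqP -> /= x Tx.
  by apply: continuous_comp; [exact: (ck 0%N x Tx) | exact: (sh.2 0%N _ (kTS x Tx))].
move=> i; rewrite leq_eqVlt => /orP [/eqP ->|]; last by rewrite ltnS; exact: IH.
have dh x : T x -> differentiable h (k x).
  move=> Tx; apply: (differentiable_partials oS (kTS x Tx)).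
    by move=> y Sy v; have [d _] := sh.2 1%N; exact: d.
  by move=> i0; have [_ c] := sh.2 1%N; exact: (c _ _ (kTS x Tx)).
have dk x : T x -> forall v, derivable k x v.
  by move=> Tx v; have [d _] := ck 1%N; exact: d.
split; first by move=> x Tx v; have [] := derive_comp_partials (dh x Tx) (dk x Tx v).
move=> v; apply: (Ck_on_eq (h1 := fun x => \sum_(i < N) ('D_v k x) 0 i *:
                 ((fun y => 'D_(delta_mx 0 i) h y) \o k) x)) => //.
  by move=> x Tx; have [_ ->] := derive_comp_partials (dh x Tx) (dk x Tx v).
apply: (@Ck_upto_sum _ _ _ j) => // i0; apply: Ck_upto_scale => //.
  apply: (Ck_upto_postcomp (h := fun x => 'D_v k x) _ (clinear_coord i0)) => //.
  exact/smooth_on_Ck_upto/smooth_on_derive.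
exact/IH/smooth_on_derive.
Qed.

Lemma smooth_on_comp {V : normedModType R} N M (S : set 'rV[R]_N) (T : set V)
    (k : V -> 'rV[R]_N) (h : 'rV[R]_N -> 'rV[R]_M) :
  smooth_on S h -> smooth_on T k -> (forall x, T x -> S (k x)) ->
  smooth_on T (h \o k).
Proof.
move=> sh sk kTS; split; first exact: sk.1.
by move=> j; exact: (Ck_upto_comp sh.1 sk kTS sh (leqnn j)).
Qed.

End FiniteDimensional.

Section Coordinates.
Context {R : realType}.

(* The chain rule is proved for maps on row vectors; coordinates transport it
   to products of matrix spaces. *)
Record fin_coords (X : normedModType R) := FinCoords {
  coord_dim : nat;
  encode : X -> 'rV[R]_coord_dim;
  decode : 'rV[R]_coord_dim -> X;
  encode_clinear : clinear encode;
  decode_clinear : clinear decode;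
  encodeK : cancel encode decode }.

Lemma clinear_mxvec a b : clinear (@mxvec R a b).
Proof.
split; last by split => *; rewrite ?linearD ?linearZ.
move=> A; apply: continuous_mx_entrywise => i k; rewrite (ord1 i).
case/mxvec_indexP: k => r c.
under [X in {for _, continuous X}]eq_fun do rewrite mxvecE.
exact: coord_continuous.
Qed.

Lemma clinear_vec_mx a b : clinear (@vec_mx R a b).
Proof.
split; last by split => *; rewrite ?linearD ?linearZ.
move=> v; apply: continuous_mx_entrywise => r c.
have -> : (fun y : 'rV[R]_(a * b) => vec_mx y r c) = (fun y => y 0 (mxvec_index r c)).
  by apply/funext => y; rewrite -[in RHS](vec_mxK y) mxvecE.
exact: coord_continuous.
Qed.

Definition fin_coords_mx a b : fin_coords 'M[R]_(a, b) :=
  FinCoords (clinear_mxvec a b) (clinear_vec_mx a b) (@mxvecK R a b).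

Lemma clinear_row_mx {X Y : normedModType R} n1 n2 (f : X -> 'rV[R]_n1)
    (g : Y -> 'rV[R]_n2) :
  clinear f -> clinear g -> clinear (fun p : X * Y => row_mx (f p.1) (g p.2)).
Proof.
move=> [cf [fD fZ]] [cg [gD gZ]]; split; last first.
  by split => *; rewrite /= ?fD ?gD ?fZ ?gZ ?add_row_mx ?scale_row_mx.
move=> p; apply: continuous_mx_entrywise => i k; rewrite (ord1 i).
rewrite -[k]splitK; case: (fintype.split k) => l /=.
  under [X in {for _, continuous X}]eq_fun do rewrite row_mxEl.
  apply: (@continuous_comp _ _ _ fst (fun x => f x 0 l)); first exact: cvg_fst.
  apply: (@continuous_comp _ _ _ f (fun w : 'rV[R]_n1 => w 0 l)); first exact: cf.
  exact: coord_continuous.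
under [X in {for _, continuous X}]eq_fun do rewrite row_mxEr.
apply: (@continuous_comp _ _ _ snd (fun x => g x 0 l)); first exact: cvg_snd.
apply: (@continuous_comp _ _ _ g (fun w : 'rV[R]_n2 => w 0 l)); first exact: cg.
exact: coord_continuous.
Qed.

Lemma clinear_lsubmx n1 n2 : clinear (fun r : 'rV[R]_(n1 + n2) => lsubmx r).
Proof. by split; [exact: continuous_lsubmx | split => *; rewrite ?linearD ?linearZ]. Qed.

Lemma clinear_rsubmx n1 n2 : clinear (fun r : 'rV[R]_(n1 + n2) => rsubmx r).
Proof. by split; [exact: continuous_rsubmx | split => *; rewrite ?linearD ?linearZ]. Qed.

Definition fin_coords_prod {X Y : normedModType R} (cx : fin_coords X)
    (cy : fin_coords Y) : fin_coords (X * Y)%type.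
Proof.
refine (@FinCoords _ (coord_dim cx + coord_dim cy)
   (fun p => row_mx (encode cx p.1) (encode cy p.2))
   (fun r => (decode (f := cx) (lsubmx r), decode (f := cy) (rsubmx r))) _ _ _).
- exact: clinear_row_mx (encode_clinear cx) (encode_clinear cy).
- apply: clinear_pair.
    exact: clinear_comp (clinear_lsubmx _ _) (decode_clinear cx).
  exact: clinear_comp (clinear_rsubmx _ _) (decode_clinear cy).
- by move=> [x y] /=; rewrite row_mxKl row_mxKr !encodeK.
Defined.

End Coordinates.

Section SmoothNear.
Context {R : realType}.

Lemma smooth_on_id {V : normedModType R} : smooth_on setT (@id V).
Proof.
split => [|[|k]] /=; first exact: openT.
  by move=> x _; exact: cvg_id.
split; first by move=> x _ v; exact: derivable_id.
move=> v; apply: (Ck_on_eq (h1 := fun _ => v)); first exact: openT.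
  by move=> x _; rewrite derive_id.
exact: Ck_on_cst openT.
Qed.

Lemma smooth_near_continuous {V W : normedModType R} (h : V -> W) p :
  smooth_near h p -> {for p, continuous h}.
Proof. by move=> [A [Ap [_ c]]]; exact: (c 0%N p Ap). Qed.

Lemma smooth_near_clinear {V W : normedModType R} (L : V -> W) p :
  clinear L -> smooth_near L p.
Proof. by move=> hL; exists setT; split => //; exact: smooth_on_postcomp smooth_on_id. Qed.

Lemma smooth_near_postcomp {V W W' : normedModType R} (h : V -> W) (L : W -> W')
    p :
  clinear L -> smooth_near h p -> smooth_near (L \o h) p.
Proof. by move=> hL [A [Ap sA]]; exists A; split => //; exact: smooth_on_postcomp. Qed.

Lemma smooth_near_precomp {V V' W : normedModType R} (L : V' -> V) (h : V -> W)
    p :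
  clinear L -> smooth_near h (L p) -> smooth_near (h \o L) p.
Proof.
by move=> hL [A [Ap sA]]; exists (L @^-1` A); split => //; exact: smooth_on_precomp.
Qed.

Lemma smooth_near_add {V W : normedModType R} (f g : V -> W) p :
  smooth_near f p -> smooth_near g p -> smooth_near (fun x => f x + g x) p.
Proof.
move=> [A [Ap [oA sA]]] [B [Bp [oB sB]]]; exists (A `&` B); split => //.
have oAB : open (A `&` B) by exact: openI.
split => // k; apply: Ck_on_add => //.
  by apply: Ck_on_sub (sA k) => x [].
by apply: Ck_on_sub (sB k) => x [].
Qed.

Lemma smooth_near_pair {V X Y : normedModType R} (f : V -> X) (g : V -> Y) p :
  smooth_near f p -> smooth_near g p -> smooth_near (fun x => (f x, g x)) p.
Proof.
move=> sf sg.
have := smooth_near_add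
  (smooth_near_postcomp (clinear_pair clinear_id (@clinear0 _ _ Y)) sf)
  (smooth_near_postcomp (clinear_pair (@clinear0 _ _ X) clinear_id) sg).
congr smooth_near; apply/funext => x /=.
by change ((f x + 0, 0 + g x) = (f x, g x)); rewrite addr0 add0r.
Qed.

Lemma smooth_near_eq {V W : normedModType R} (h1 h2 : V -> W) p (O : set V) :
  open O -> O p -> (forall x, O x -> h1 x = h2 x) ->
  smooth_near h1 p -> smooth_near h2 p.
Proof.
move=> oO Op e [A [Ap [oA sA]]]; exists (A `&` O); split => //.
have oAO : open (A `&` O) by exact: openI.
split => // k; apply: (Ck_on_eq (h1 := h1)) => //; first by move=> x [_ Ox]; exact: e.
by apply: Ck_on_sub (sA k) => x [].
Qed.

Lemma smooth_near_comp {V X : normedModType R} (cX : fin_coords X) M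
    (h : X -> 'rV[R]_M) (k : V -> X) p (S : set X) :
  smooth_on S h -> S (k p) -> smooth_near k p -> smooth_near (h \o k) p.
Proof.
move=> sh Skp [T [Tp sk]].
pose S' := decode (f := cX) @^-1` S.
pose k' := encode cX \o k.
pose T' := T `&` k' @^-1` S'.
have sh' : smooth_on S' (h \o decode (f := cX)).
  exact: smooth_on_precomp (decode_clinear cX) sh.
have sk' : smooth_on T k' := smooth_on_postcomp (encode_clinear cX) sk.
have oT' : open T'.
  rewrite openE => x [Tx S'x]; apply: filterI; first exact: open_nbhs_of sk.1 Tx.
  apply: continuous_comp; first exact: (sk.2 0%N x Tx).
    exact: (encode_clinear cX).1.
  exact: open_nbhs_of sh'.1 S'x.
have sk'' : smooth_on T' k' by split => // i; apply: Ck_on_sub (sk'.2 i) => x [].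
have hk : h \o k = (h \o decode (f := cX)) \o k' by apply/funext => x /=; rewrite encodeK.
exists T'; split; first by split => //; rewrite /S' /k' /= encodeK.
by rewrite hk; apply: smooth_on_comp sh' sk'' _ => x [].
Qed.

End SmoothNear.

Section Windows.
Context {R : realType} {m : nat}.
Local Notation In := 'rV[R]_m.

Lemma clinear_rowsub a b (s : 'I_b -> 'I_a) :
  clinear (rowsub s : 'M[R]_(a, m) -> 'M[R]_(b, m)).
Proof.
split; last by split => *; apply/matrixP => i j; rewrite !mxE.
move=> M; apply: continuous_mx_entrywise => i j.
under [X in {for _, continuous X}]eq_fun do rewrite mxE.
exact: coord_continuous.
Qed.

Lemma rowsub_cwin a b (s : 'I_b -> 'I_a) (c : In) : rowsub s (cwin a c) = cwin b c.
Proof. by apply/matrixP => i j; rewrite !mxE. Qed.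

Lemma rowsub_win a b L L' (s : 'I_L' -> 'I_L) (w w' : int -> In) :
  (forall i : 'I_L', w (a + (s i : nat)%:Z) = w' (b + (i : nat)%:Z)) ->
  rowsub s (win w a L) = win w' b L'.
Proof. by move=> e; apply/matrixP => i j; rewrite !mxE e. Qed.

Lemma rev_win_rowsub L (M : 'M[R]_(L, m)) : rev_win M = rowsub (@rev_ord L) M.
Proof. by apply/matrixP => i j; rewrite !mxE. Qed.

Lemma clinear_rev_win L : clinear (@rev_win R m L).
Proof.
have -> : @rev_win R m L = rowsub (@rev_ord L) by apply/funext => M; rewrite rev_win_rowsub.
exact: clinear_rowsub.
Qed.

Lemma rev_win_cwin L (c : In) : rev_win (cwin L c) = cwin L c.
Proof. by rewrite rev_win_rowsub rowsub_cwin. Qed.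

Lemma rev_winK L : involutive (@rev_win R m L).
Proof. by move=> M; apply/matrixP => i j; rewrite !mxE rev_ordK. Qed.

Lemma win_cst (c : In) a L : win (fun _ => c) a L = cwin L c.
Proof. by apply/matrixP => i j; rewrite !mxE. Qed.

Lemma win_ball (y : int -> In) (y0 : In) (e : R) a L : 0 < e ->
  (forall k, ball y0 (e / 2) (y k)) -> ball (cwin L y0) e (win y a L).
Proof.
move=> e0 H; rewrite -ball_normE /=.
apply: (@le_lt_trans _ _ (e / 2)); last by rewrite ltr_pdivrMr // ltr_pMr // ltr1n.
apply: mx_norm_le => [|i j]; first by rewrite divr_ge0 // ltW.
have := H (a + (i : nat)%:Z); rewrite -ball_normE /= => /ltW; apply: le_trans.
by have := mx_entry_le_norm (y0 - y (a + (i : nat)%:Z)) 0 j; rewrite !mxE.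
Qed.

End Windows.

Section Trajectories.
Context {R : realType} {n m : nat}.
Local Notation St := 'rV[R]_n.
Local Notation In := 'rV[R]_m.

Definition left_inverse_on (F : St -> In -> St) (G : St -> In -> In)
    (PX : St -> In -> St) (PU : St -> In -> In) (A B : set (St * In)) :=
  forall p, A p -> B (F p.1 p.2, G p.1 p.2) /\
    PX (F p.1 p.2) (G p.1 p.2) = p.1 /\ PU (F p.1 p.2) (G p.1 p.2) = p.2.

Definition flat_out (G : St -> In -> In) Q1 Q2
    (phi : 'M[R]_(Q1, m) -> St -> In -> 'M[R]_(Q2, m) -> In)
    (x : int -> St) (u : int -> In) : int -> In :=
  fun k => phi (win (fun j => G (x j) (u j)) (k - Q1%:Z) Q1) (x k) (u k)
               (win u (k + 1) Q2).

Definition param_x R1 R2 (Fx : 'M[R]_(R1 + R2, m) -> St) (y : int -> In) :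
    int -> St :=
  fun k => Fx (win y (k - R1%:Z) (R1 + R2)).

Definition param_u R1 R2 (Fu : 'M[R]_((R1 + R2).+1, m) -> In) (y : int -> In) :
    int -> In :=
  fun k => Fu (win y (k - R1%:Z) (R1 + R2).+1).

(* The last conjunct of [flat_output_R], with its windows named. *)
Definition flat_correspondence (F : St -> In -> St) (G : St -> In -> In) Q1 Q2
    (phi : 'M[R]_(Q1, m) -> St -> In -> 'M[R]_(Q2, m) -> In) R1 R2
    (Fx : 'M[R]_(R1 + R2, m) -> St) (Fu : 'M[R]_((R1 + R2).+1, m) -> In)
    (U : set (St * In)) (Y : set In) :=
  (forall x u, traj F x u -> (forall k, U (x k, u k)) ->
     forall k, x k = param_x Fx (flat_out G phi x u) k /\
               u k = param_u Fu (flat_out G phi x u) k) /\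
  (forall y, (forall k, Y (y k)) ->
     traj F (param_x Fx y) (param_u Fu y) /\
     forall k, y k = flat_out G phi (param_x Fx y) (param_u Fu y) k).

Lemma traj_pred (F : St -> In -> St) x u :
  traj F x u -> forall k, x k = F (x (k - 1)) (u (k - 1)).
Proof. by move=> tr k; rewrite -tr subrK. Qed.

Lemma traj_time_reversal (F PX : St -> In -> St) (PU : St -> In -> In) B z v :
  (forall q, B q -> F (PX q.1 q.2) (PU q.1 q.2) = q.1) ->
  traj PX z v -> (forall k, B (z k, v k)) ->
  traj F (fun j => z (- j)) (fun j => PU (z (- j - 1)) (v (- j - 1))).
Proof.
move=> FK tr hB j /=; rewrite (traj_pred tr (- j)) (FK (z (- j - 1), v (- j - 1))) //=.
by rewrite opprD.
Qed.

Lemma flat_equilibrium (F : St -> In -> St) (G : St -> In -> In) Q1 Q2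
    (phi : 'M[R]_(Q1, m) -> St -> In -> 'M[R]_(Q2, m) -> In) R1 R2
    (Fx : 'M[R]_(R1 + R2, m) -> St) (Fu : 'M[R]_((R1 + R2).+1, m) -> In) U Y x0 u0 :
  flat_correspondence F G phi Fx Fu U Y -> U (x0, u0) -> F x0 u0 = x0 ->
  let y0 := phi (cwin Q1 (G x0 u0)) x0 u0 (cwin Q2 u0) in
  x0 = Fx (cwin (R1 + R2) y0) /\ u0 = Fu (cwin (R1 + R2).+1 y0).
Proof.
move=> [C1 _] U0 Feq y0.
have := C1 (fun _ => x0) (fun _ => u0) (fun _ => esym Feq) (fun _ => U0) 0.
have -> : flat_out G phi (fun _ => x0) (fun _ => u0) = fun _ => y0.
  by apply/funext => k; rewrite /flat_out !win_cst.
by rewrite /param_x /param_u !win_cst.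
Qed.

Lemma param_stays_near (A : set (St * In)) R1 R2 (Fx : 'M[R]_(R1 + R2, m) -> St)
    (Fu : 'M[R]_((R1 + R2).+1, m) -> In) (y0 : In) :
  open A -> A (Fx (cwin (R1 + R2) y0), Fu (cwin (R1 + R2).+1 y0)) ->
  {for cwin (R1 + R2) y0, continuous Fx} ->
  {for cwin (R1 + R2).+1 y0, continuous Fu} ->
  exists2 Y' : set In, nbhs y0 Y' &
    forall y, (forall k, Y' (y k)) -> forall k, A (param_x Fx y k, param_u Fu y k).
Proof.
move=> oA A0 cFx cFu.
pose Th (W : 'M[R]_((R1 + R2).+1, m)) := (Fx (rowsub (widen_ord (leqnSn _)) W), Fu W).
have cTh : {for cwin (R1 + R2).+1 y0, continuous Th}.
  apply: (cvg_pair (FF := nbhs_filter _) (FG := nbhs_filter _) (FH := nbhs_filter _)) => //.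
  apply: (@continuous_comp _ _ _ (rowsub (widen_ord (leqnSn _))) Fx).
    exact: (clinear_rowsub _).1.
  by rewrite rowsub_cwin.
have : nbhs (cwin (R1 + R2).+1 y0) (Th @^-1` A).
  by apply: cTh; rewrite /Th rowsub_cwin; exact: open_nbhs_of oA A0.
move=> /nbhs_ballP [eps /= eps0 heps]; exists (ball y0 (eps / 2)).
  by apply: nbhsx_ballx; rewrite divr_gt0.
move=> y hy k; have := heps _ (win_ball (k - R1%:Z) _ eps0 hy).
by rewrite /Th /= (rowsub_win (w' := y) (b := k - R1%:Z)).
Qed.

End Trajectories.

Section ReversedParametrization.
Context {R : realType} {n m : nat} (R1 R2 : nat).
Local Notation St := 'rV[R]_n.
Local Notation In := 'rV[R]_m.

Definition rev_ix (i : 'I_(R1 + R2)) : 'I_(R2 + R1) :=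
  cast_ord (addnC R1 R2) (rev_ord i).
Definition rev_iu (i : 'I_(R1 + R2).+1) : 'I_(R2 + R1).+1 :=
  cast_ord (congr1 S (addnC R1 R2)) (rev_ord i).
Definition rev_iux (i : 'I_(R1 + R2)) : 'I_(R2 + R1).+1 :=
  rev_iu (widen_ord (leqnSn _) i).

Definition rev_param_x (Fx : 'M[R]_(R1 + R2, m) -> St) (M : 'M[R]_(R2 + R1, m)) :=
  Fx (rowsub rev_ix M).

(* The associated input at time k is zeta(-k-1) = g(x(-k-1), u(-k-1)). *)
Definition rev_param_u (G : St -> In -> In) (Fx : 'M[R]_(R1 + R2, m) -> St)
    (Fu : 'M[R]_((R1 + R2).+1, m) -> In) (M : 'M[R]_((R2 + R1).+1, m)) :=
  G (Fx (rowsub rev_iux M)) (Fu (rowsub rev_iu M)).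

Section Reindexing.
Variables (y yhat : int -> In).
Hypothesis yhatE : forall k, yhat k = y (- k - 1).

Lemma param_x_reverse Fx k :
  param_x (rev_param_x Fx) yhat k = param_x Fx y (- k).
Proof.
congr Fx; apply: rowsub_win => i; rewrite yhatE; congr y.
by move: (ltn_ord i) => /=; lia.
Qed.

Lemma param_u_reverse G Fx Fu k :
  param_u (rev_param_u G Fx Fu) yhat k =
  G (param_x Fx y (- k - 1)) (param_u Fu y (- k - 1)).
Proof.
congr G; [congr Fx | congr Fu]; apply: rowsub_win => i; rewrite yhatE; congr y;
  by move: (ltn_ord i) => /=; lia.
Qed.

End Reindexing.

Lemma smooth_near_rev_param_x Fx (y0 : In) :
  smooth_near Fx (cwin (R1 + R2) y0) ->
  smooth_near (rev_param_x Fx) (cwin (R2 + R1) y0).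
Proof.
move=> sFx; apply: (smooth_near_precomp (h := Fx) (clinear_rowsub rev_ix)).
by rewrite rowsub_cwin.
Qed.

Lemma smooth_near_rev_param_u (A : set (St * In)) G Fx Fu (y0 : In) :
  smooth_on A (fun p => G p.1 p.2) ->
  A (Fx (cwin (R1 + R2) y0), Fu (cwin (R1 + R2).+1 y0)) ->
  smooth_near Fx (cwin (R1 + R2) y0) -> smooth_near Fu (cwin (R1 + R2).+1 y0) ->
  smooth_near (rev_param_u G Fx Fu) (cwin (R2 + R1).+1 y0).
Proof.
move=> sG A0 sFx sFu.
pose k M := (Fx (rowsub rev_iux M), Fu (rowsub rev_iu M)).
change (smooth_near ((fun p : St * In => G p.1 p.2) \o k) (cwin (R2 + R1).+1 y0)).
apply: (smooth_near_comp (fin_coords_prod (fin_coords_mx 1 n) (fin_coords_mx 1 m)) sG).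
  by rewrite /k /= !rowsub_cwin.
apply: smooth_near_pair.
  by apply: (smooth_near_precomp (h := Fx) (clinear_rowsub rev_iux)); rewrite rowsub_cwin.
by apply: (smooth_near_precomp (h := Fu) (clinear_rowsub rev_iu)); rewrite rowsub_cwin.
Qed.

End ReversedParametrization.

Section TimeReversal.
Context {R : realType} {n m : nat}.
Local Notation St := 'rV[R]_n.
Local Notation In := 'rV[R]_m.

Variables (F PX : St -> In -> St) (G PU : St -> In -> In) (A B : set (St * In)).
Hypotheses (FGK : left_inverse_on F G PX PU A B) (PK : left_inverse_on PX PU F G B A).
Variables (Q1 Q2 : nat) (phi : 'M[R]_(Q1, m) -> St -> In -> 'M[R]_(Q2, m) -> In)
  (phi' : 'M[R]_(Q2, m) -> St -> In -> 'M[R]_(Q1, m) -> In).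
Hypothesis phi'E : forall a z v w, B (z, v) ->
  phi' a z v w = phi (rev_win w) (PX z v) (PU z v) (rev_win a).

Lemma flat_out_reverse z v x u : traj PX z v -> (forall k, B (z k, v k)) ->
  (forall j, x j = z (- j)) -> (forall j, u j = PU (z (- j - 1)) (v (- j - 1))) ->
  (forall j, G (x j) (u j) = v (- j - 1)) ->
  forall k, flat_out PU phi' z v k = flat_out G phi x u (- k - 1).
Proof.
move=> tr hB hx hu hG k; rewrite /flat_out phi'E // hx hu.
have -> : - (- k - 1) - 1 = k by lia.
have -> : - (- k - 1) = k + 1 by lia.
rewrite tr; congr phi; rewrite rev_win_rowsub;
  apply: rowsub_win => i /=.
  by rewrite hG; congr v; move: (ltn_ord i); lia.
by rewrite hu; congr (PU (z _) (v _)); move: (ltn_ord i); lia.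
Qed.

Section Parametrization.
Variables (R1 R2 : nat) (Fx : 'M[R]_(R1 + R2, m) -> St)
  (Fu : 'M[R]_((R1 + R2).+1, m) -> In).

Lemma reversed_traj_param (U : set (St * In)) (Y : set In) :
  flat_correspondence F G phi Fx Fu U Y ->
  forall z v, traj PX z v ->
  (forall k, B (z k, v k) /\ U (PX (z k) (v k), PU (z k) (v k))) ->
  forall k, z k = param_x (rev_param_x Fx) (flat_out PU phi' z v) k /\
            v k = param_u (rev_param_u G Fx Fu) (flat_out PU phi' z v) k.
Proof.
move=> [C1 _] z v tr hU k.
have hB j : B (z j, v j) by case: (hU j).
pose x j := z (- j); pose u j := PU (z (- j - 1)) (v (- j - 1)).
have xE j : x j = PX (z (- j - 1)) (v (- j - 1)) := traj_pred tr (- j).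
have trF : traj F x u.
  by apply: traj_time_reversal tr hB => q Bq; have [_ []] := PK Bq.
have hG j : G (x j) (u j) = v (- j - 1) by rewrite xE; have [_ []] := PK (hB (- j - 1)).
have hUx j : U (x j, u j) by rewrite xE; exact: (hU _).2.
have Cxu := C1 x u trF hUx.
have hy := flat_out_reverse tr hB (fun _ => erefl) (fun _ => erefl) hG.
rewrite (param_x_reverse hy) (param_u_reverse hy).
have [<- _] := Cxu (- k); have [<- <-] := Cxu (- k - 1).
by rewrite hG /x opprK; split; last by congr v; lia.
Qed.

Lemma reversed_param_traj (U : set (St * In)) (Y Y' : set In) :
  flat_correspondence F G phi Fx Fu U Y -> Y' `<=` Y ->
  (forall y, (forall k, Y' (y k)) -> forall k, A (param_x Fx y k, param_u Fu y k)) ->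
  forall yhat, (forall k, Y' (yhat k)) ->
  let z := param_x (rev_param_x Fx) yhat in
  let v := param_u (rev_param_u G Fx Fu) yhat in
  traj PX z v /\ forall k, yhat k = flat_out PU phi' z v k.
Proof.
move=> [_ C2] Y'Y inA yhat hY z v.
pose y j := yhat (- j - 1).
have yhatE k : yhat k = y (- k - 1) by rewrite /y; congr yhat; lia.
have hY' j : Y' (y j) := hY _.
have [trF yE] := C2 y (fun j => Y'Y _ (hY' j)).
set x := param_x Fx y in trF yE; set u := param_u Fu y in trF yE.
have hA k : A (x k, u k) := inA y hY' k.
have zE k : z k = x (- k) := param_x_reverse yhatE Fx k.
have vE k : v k = G (x (- k - 1)) (u (- k - 1)) := param_u_reverse yhatE G Fx Fu k.
have hB k : B (z k, v k).
  by rewrite zE vE (traj_pred trF (- k)); have [] := FGK (hA (- k - 1)).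
have trPX : traj PX z v.
  have -> : z = fun j => x (- j) by apply/funext => j; rewrite zE.
  have -> : v = fun j => G (x (- j - 1)) (u (- j - 1)) by apply/funext => j; rewrite vE.
  by apply: traj_time_reversal trF hA => p Ap; have [_ []] := FGK Ap.
have hout k : flat_out PU phi' z v k = flat_out G phi x u (- k - 1).
  apply: flat_out_reverse trPX hB _ _ _ k => j.
  - by rewrite zE opprK.
  - have [e1 e2] : - (- j - 1) = j + 1 /\ - (- j - 1) - 1 = j by split; lia.
    by rewrite zE vE e2 e1 trF; have [_ []] := FGK (hA j).
  - by rewrite vE (_ : - (- j - 1) - 1 = j) //; lia.
by split => // k; rewrite hout yhatE; exact: yE.
Qed.

End Parametrization.

Hypotheses (sA : smooth_on A (fun p => (F p.1 p.2, G p.1 p.2)))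
  (sB : smooth_on B (fun q => (PX q.1 q.2, PU q.1 q.2))).

Lemma smooth_near_reversed_output (x0 : St) (u0 v0 : In) :
  B (x0, v0) -> PX x0 v0 = x0 -> PU x0 v0 = u0 ->
  smooth_near (fun w : 'M[R]_(Q1, m) * (St * (In * 'M[R]_(Q2, m))) =>
                 phi w.1 w.2.1 w.2.2.1 w.2.2.2) (cwin Q1 v0, (x0, (u0, cwin Q2 u0))) ->
  smooth_near (fun w : 'M[R]_(Q2, m) * (St * (In * 'M[R]_(Q1, m))) =>
                 phi' w.1 w.2.1 w.2.2.1 w.2.2.2) (cwin Q2 u0, (x0, (v0, cwin Q1 v0))).
Proof.
move=> B0 PX0 PU0 [S [S0 sS]].
pose P (w : 'M[R]_(Q2, m) * (St * (In * 'M[R]_(Q1, m)))) := (w.2.1, w.2.2.1).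
have lP : clinear P.
  apply: clinear_pair; first exact: clinear_comp clinear_snd clinear_fst.
  exact: clinear_comp (clinear_comp clinear_snd clinear_snd) clinear_fst.
have spsi : smooth_near ((fun q => (PX q.1 q.2, PU q.1 q.2)) \o P)
    (cwin Q2 u0, (x0, (v0, cwin Q1 v0))).
  by apply: smooth_near_precomp lP _; exists B.
pose Psi (w : 'M[R]_(Q2, m) * (St * (In * 'M[R]_(Q1, m)))) :=
  (rev_win w.2.2.2, (PX w.2.1 w.2.2.1, (PU w.2.1 w.2.2.1, rev_win w.1))).
have sPsi : smooth_near Psi (cwin Q2 u0, (x0, (v0, cwin Q1 v0))).
  apply: smooth_near_pair; last apply: smooth_near_pair; last apply: smooth_near_pair.
  - apply: smooth_near_clinear; apply: clinear_comp (clinear_rev_win _).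
    exact: clinear_comp (clinear_comp clinear_snd clinear_snd) clinear_snd.
  - exact: smooth_near_postcomp clinear_fst spsi.
  - exact: smooth_near_postcomp clinear_snd spsi.
  - exact/smooth_near_clinear/(clinear_comp clinear_fst (clinear_rev_win _)).
pose cX : fin_coords ('M[R]_(Q1, m) * (St * (In * 'M[R]_(Q2, m))))%type :=
  fin_coords_prod (fin_coords_mx Q1 m) (fin_coords_prod (fin_coords_mx 1 n)
  (fin_coords_prod (fin_coords_mx 1 m) (fin_coords_mx Q2 m))).
have SPsi : S (Psi (cwin Q2 u0, (x0, (v0, cwin Q1 v0)))).
  by rewrite /Psi /= PX0 PU0 !rev_win_cwin.
apply: (smooth_near_eq (O := P @^-1` B)) (smooth_near_comp cX sS SPsi sPsi) => //.
- by apply: open_comp => [w _|]; [exact: lP.1 | exact: sB.1].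
- by move=> w Bw /=; rewrite phi'E.
Qed.

Lemma flat_output_R_reverse (x0 : St) (u0 : In) R1 R2 :
  A (x0, u0) -> F x0 u0 = x0 ->
  flat_output_R F G x0 u0 Q1 Q2 phi R1 R2 ->
  flat_output_R PX PU x0 (G x0 u0) Q2 Q1 phi' R2 R1.
Proof.
move=> A0 Feq; have [B0 [PX0 PU0]] := FGK A0; rewrite /= Feq in B0 PX0 PU0.
rewrite /flat_output_R /= PU0.
move=> [Fx [Fu [sphi [sFx [sFu [U [Y [nU [nY HC0]]]]]]]]].
have HC : flat_correspondence F G phi Fx Fu U Y := HC0.
set y0 := phi _ x0 u0 _ in sFx sFu nY.
rewrite (_ : phi' _ _ _ _ = y0); last by rewrite phi'E // PX0 PU0 !rev_win_cwin.
have [EX EU] := flat_equilibrium HC (nbhs_singleton nU) Feq.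
have [Y' nY' inA] : exists2 Y' : set In, nbhs y0 Y' &
    forall y, (forall k, Y' (y k)) -> forall k, A (param_x Fx y k, param_u Fu y k).
  apply: param_stays_near sA.1 _ (smooth_near_continuous sFx) (smooth_near_continuous sFu).
  by rewrite -EX -EU.
exists (rev_param_x Fx), (rev_param_u G Fx Fu).
split; first exact: smooth_near_reversed_output.
split; first exact: smooth_near_rev_param_x.
split.
  apply: smooth_near_rev_param_u (smooth_on_postcomp clinear_snd sA) _ sFx sFu.
  by rewrite -EX -EU.
exists (fun q => B q /\ U (PX q.1 q.2, PU q.1 q.2)), (Y `&` Y'); split.
  apply: filterI; first exact: open_nbhs_of sB.1 B0.
  by apply: (sB.2 0%N _ B0); rewrite /= PX0 PU0.
split; first exact: filterI.
split; first exact: reversed_traj_param HC.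
apply: reversed_param_traj HC _ _ => [y []//|y hy]; apply: inA => k.
by case: (hy k).
Qed.

End TimeReversal.

Unset Implicit Arguments.

Theorem corollary1 (R : realType) (n m : nat)
    (f : 'rV[R]_n -> 'rV[R]_m -> 'rV[R]_n) (g : 'rV[R]_n -> 'rV[R]_m -> 'rV[R]_m)
    (psix : 'rV[R]_n -> 'rV[R]_m -> 'rV[R]_n) (psiu : 'rV[R]_n -> 'rV[R]_m -> 'rV[R]_m)
    (x0 : 'rV[R]_n) (u0 : 'rV[R]_m) :
  smooth (uncurry_sys f) ->
  smooth (uncurry_sys g) ->
  (forall p, \rank (jac_u f p) = m) ->
  (forall p, \rank (row_mx (jac_x f p) (jac_u f p)) = n) ->
  f x0 u0 = x0 ->
  local_inverse f g psix psiu x0 u0 ->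
  (forall (Q2 : nat) (phi : 'rV[R]_n -> 'rV[R]_m -> 'M[R]_(Q2, m) -> 'rV[R]_m),
     is_flat_output f g x0 u0 0 Q2 (fun _ => phi) ->
     (backward_flat_output psix psiu x0 (g x0 u0) Q2
        (fun (eta : 'M[R]_(Q2, m)) z v => phi (psix z v) (psiu z v) (rev_win eta))
      <-> forward_flat_output f g x0 u0 Q2 phi)) /\
  (forall (Q1 : nat) (phi : 'M[R]_(Q1, m) -> 'rV[R]_n -> 'rV[R]_m -> 'rV[R]_m),
     is_flat_output f g x0 u0 Q1 0 (fun a x u _ => phi a x u) ->
     (forward_flat_output psix psiu x0 (g x0 u0) Q1
        (fun z v (vw : 'M[R]_(Q1, m)) => phi (rev_win vw) (psix z v) (psiu z v))
      <-> backward_flat_output f g x0 u0 Q1 phi)).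
Proof.
move=> _ _ _ _ Feq [A [B [A0 [_ [sA [sB [FGK PK]]]]]]].
have [B0 [PX0 PU0]] := FGK _ A0; rewrite /= Feq in B0 PX0 PU0.
have unreverse Q1 Q2 R1 R2
    (phi : 'M[R]_(Q1, m) -> 'rV[R]_n -> 'rV[R]_m -> 'M[R]_(Q2, m) -> 'rV[R]_m)
    (phi' : 'M[R]_(Q2, m) -> 'rV[R]_n -> 'rV[R]_m -> 'M[R]_(Q1, m) -> 'rV[R]_m) :
    (forall a x u w, A (x, u) ->
       phi a x u w = phi' (rev_win w) (f x u) (g x u) (rev_win a)) ->
    flat_output_R psix psiu x0 (g x0 u0) Q2 Q1 phi' R2 R1 ->
    flat_output_R f g x0 u0 Q1 Q2 phi R1 R2.
  move=> phiE H.
  by have := flat_output_R_reverse PK FGK phiE sB sA B0 PX0 H; rewrite PU0.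
split=> [Q2 phi _ | Q1 phi _]; split=> [[R' H] | [R' H]]; exists R'.
- by apply: unreverse H => a x u w /FGK /= [_ [-> ->]]; rewrite rev_winK.
- exact: (flat_output_R_reverse FGK PK _ sA sB A0 Feq H).
- by apply: unreverse H => a x u w /FGK /= [_ [-> ->]]; rewrite rev_winK.
- exact: (flat_output_R_reverse FGK PK _ sA sB A0 Feq H).
Qed.
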